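(* Let $n\ge4$ and $\mathcal G\in\mathbb G^n_S$, with orthogonal decomposition $\mathcal G=\mathcal G_{cpi}+\mathcal G_{cyclic}$. Then $\mathcal G_{cpi}$ has edge weights $\omega_j+\omega_k$ where $$\omega_j=\frac1{n-2}\Big[S_S(V_j)-\tfrac12T(\mathcal G)\Big],\qquad j=1,\dots,n,$$ and $T(\mathcal G)=T(\mathcal G_{cpi})=2\sum_{j=1}^n\omega_j$. Moreover, the length in $\mathcal G$ of every Hamiltonian circuit equals $T(\mathcal G)$ plus its length in $\mathcal G_{cyclic}=\mathcal G-\mathcal G_{cpi}$.
   Context: $\mathbb G^n_S$ is the space of complete undirected weighted graphs without loops on $V_1,\dots,V_n$ with edge weights $d_{i,j}=d_{j,i}$, identified with $\mathbb R^{\binom n2}$ with the standard inner product. $\mathbb{CPI}^n_S$ is the subspace of graphs with $d_{j,k}=\omega_j+\omega_k$ for some reals $\omega_j$; $\mathbb C^n_S$ is its orthogonal complement; $\mathcal G_{cpi},\mathcal G_{cyclic}$ are the orthogonal projections of $\mathcal G$ onto these. $S_S(V_j)=\sum_{k\ne j}d_{j,k}$ and $T(\mathcal G)=\frac1{n-1}\sum_{j=1}^nS_S(V_j)$. A Hamiltonian circuit is a closed path visiting every vertex exactly once; its length is the sum of its edge weights. *)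

From HB Require Import structures.
From mathcomp Require Import all_boot all_order all_algebra.
Set Implicit Arguments. Unset Strict Implicit. Unset Printing Implicit Defensive.
Import Order.TTheory GRing.Theory Num.Theory.
Local Open Scope ring_scope.

(* A complete undirected weighted graph without loops on vertices 'I_n is
   a weight function d : 'I_n -> 'I_n -> R, required to be symmetric;
   diagonal values d i i are ignored everywhere (no loops). *)
Definition wgraph (R : realFieldType) (n : nat) := 'I_n -> 'I_n -> R.

Definition symmetric_graph (R : realFieldType) (n : nat) (d : wgraph R n) : Prop :=
  forall j k : 'I_n, d j k = d k j.

Definition ginner (R : realFieldType) (n : nat) (d e : wgraph R n) : R :=
  \sum_(j < n) \sum_(k < n | (j < k)%N) d j k * e j k.

Definition is_cpi (R : realFieldType) (n : nat) (d : wgraph R n) : Prop :=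
  exists w : 'I_n -> R, forall j k : 'I_n, j != k -> d j k = w j + w k.

Definition vsum (R : realFieldType) (n : nat) (d : wgraph R n) (j : 'I_n) : R :=
  \sum_(k < n | k != j) d j k.

Definition Ttot (R : realFieldType) (n : nat) (d : wgraph R n) : R :=
  (n.-1)%:R^-1 * \sum_(j < n) vsum d j.

(* A Hamiltonian circuit is given by the cyclic sequence s of its vertices,
   visiting every vertex exactly once. *)
Definition hamiltonian (n : nat) (s : seq 'I_n) : Prop :=
  uniq s /\ size s = n.

Definition circuit_length (R : realFieldType) (n : nat) (d : wgraph R n)
  (s : seq 'I_n) : R :=
  \sum_(p <- zip s (rot 1 s)) d p.1 p.2.

From HB Require Import structures.
From mathcomp Require Import all_boot all_order all_algebra.
From mathcomp Require Import ring.
Set Implicit Arguments. Unset Strict Implicit. Unset Printing Implicit Defensive.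
Import Order.TTheory GRing.Theory Num.Theory.
Local Open Scope ring_scope.

(* The vertex sums S_S(V_m) are inner products with the CPI graphs of weight
   vector e_m, so they vanish on the cyclic part: G and G_cpi have the same
   vertex sums, hence the same T.  For a CPI graph with weights u these sums are
   (n-2) u_m + sum u and T = 2 sum u, which can be solved for u_m as soon as
   n > 2.  Finally a Hamiltonian circuit uses every vertex as the endpoint of
   exactly two of its edges, so its length in a CPI graph is 2 sum u = T. *)

Section VertexSums.

Variables (R : realFieldType) (n : nat).
Implicit Types (d e f : wgraph R n) (u : 'I_n -> R).

Definition star_graph (m : 'I_n) : wgraph R n :=
  fun j k => (j == m)%:R + (k == m)%:R.

Lemma star_graph_sym m : symmetric_graph (star_graph m).
Proof. by move=> j k; rewrite /star_graph addrC. Qed.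

Lemma star_graph_cpi m : is_cpi (star_graph m).
Proof. by exists (fun j => (j == m)%:R). Qed.

Lemma ginner_star_graph d m :
  symmetric_graph d -> ginner d (star_graph m) = vsum d m.
Proof.
move=> sd; rewrite /ginner /star_graph.
under eq_bigr do under eq_bigr do rewrite mulrDr.
under eq_bigr do rewrite big_split /=.
rewrite big_split /=.
have -> : \sum_(j < n) \sum_(k < n | (j < k)%N) d j k * (j == m)%:R
          = \sum_(k < n | (m < k)%N) d m k.
  rewrite (bigD1 m) //= [X in _ + X]big1 ?addr0; last first.
    by move=> j jm; apply: big1 => k _; rewrite (negbTE jm) mulr0.
  by apply: eq_bigr => k _; rewrite eqxx mulr1.
have -> : \sum_(j < n) \sum_(k < n | (j < k)%N) d j k * (k == m)%:R
          = \sum_(k < n | (k < m)%N) d m k.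
  under eq_bigr do rewrite big_mkcond /=.
  rewrite exchange_big /= (bigD1 m) //= [X in _ + X]big1 ?addr0; last first.
    by move=> k km; apply: big1 => j _; rewrite (negbTE km) mulr0; case: ifP.
  rewrite [RHS]big_mkcond /=; apply: eq_bigr => j _.
  by rewrite eqxx mulr1 sd; case: ifP.
rewrite /vsum [RHS](bigID (fun k : 'I_n => (m < k)%N)) /=.
by congr (_ + _); apply: eq_bigl => k; rewrite -val_eqE /=; case: ltngtP.
Qed.

Lemma vsum_orthogonal_cpi d m :
  symmetric_graph d ->
  (forall H : wgraph R n, symmetric_graph H -> is_cpi H -> ginner d H = 0) ->
  vsum d m = 0.
Proof.
move=> sd orth; rewrite -ginner_star_graph //.
exact: orth (star_graph_sym m) (star_graph_cpi m).
Qed.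

Lemma vsumD d e f m :
  (forall j k, j != k -> d j k = e j k + f j k) ->
  vsum d m = vsum e m + vsum f m.
Proof.
move=> def; rewrite /vsum -big_split /=.
by apply: eq_bigr => k km; rewrite def // eq_sym.
Qed.

Hypothesis n_ge2 : (2 <= n)%N.

Lemma vsum_cpi d u m :
  (forall j k, j != k -> d j k = u j + u k) ->
  vsum d m = (n - 2)%:R * u m + \sum_(j < n) u j.
Proof.
move=> du; rewrite /vsum (eq_bigr (fun k => u m + u k)); last first.
  by move=> k km; rewrite du // eq_sym.
rewrite big_split /= sumr_const cardC1 card_ord [in RHS](bigD1 m) //=.
have -> : n.-1 = (n - 2).+1 by rewrite -subn1 -subSn.
by rewrite -mulr_natr; ring.
Qed.

Lemma Ttot_cpi d u :
  (forall j k, j != k -> d j k = u j + u k) ->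
  Ttot d = 2 * \sum_(j < n) u j.
Proof.
move=> du; rewrite /Ttot (eq_bigr _ (fun m _ => vsum_cpi m du)).
rewrite big_split /= -big_distrr /= sumr_const card_ord.
set U := \sum_(j < n) u j; rewrite -[U *+ n]mulr_natr.
have en1 : n.-1%:R = (n - 2)%:R + 1 :> R by rewrite natr1 -subn1 -subSn.
have en : n%:R = (n - 2)%:R + 2 :> R by rewrite -natrD subnK.
rewrite en1 en; field.
by rewrite natr1 pnatr_eq0.
Qed.

End VertexSums.

Lemma cpi_weight_vsum (R : realFieldType) (n : nat) (d : wgraph R n)
    (u : 'I_n -> R) m : (3 <= n)%N ->
  (forall j k, j != k -> d j k = u j + u k) ->
  u m = (n - 2)%:R^-1 * (vsum d m - Ttot d / 2).
Proof.
move=> n3 du; have n2 := ltnW n3.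
rewrite (vsum_cpi n2 m du) (Ttot_cpi n2 du); field.
by rewrite pnatr_eq0 -lt0n subn_gt0.
Qed.

Lemma zip_rcons_neq (T : eqType) (x y : T) (t : seq T) :
  uniq (x :: t) -> last x t != y ->
  all (fun p => p.1 != p.2) (zip (x :: t) (rcons t y)).
Proof.
elim: t x => [|a t IH] x /=; first by rewrite andbT.
move=> /andP [xat /andP [ant ut]] ly.
rewrite IH ?andbT /= ?ant //.
by apply: contraNneq xat => ->; rewrite mem_head.
Qed.

Section Circuits.

Variables (R : realFieldType) (n : nat) (s : seq 'I_n).
Hypothesis ham_s : hamiltonian s.

Lemma hamiltonian_edge_neq p : (2 <= n)%N ->
  p \in zip s (rot 1 s) -> p.1 != p.2.
Proof.
case: ham_s => us ss n2; apply/allP: p.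
case: s us ss => [|x [|a t]] us ss; try by rewrite -ss in n2.
rewrite rot1_cons; apply: zip_rcons_neq => //.
case/andP: us => xat _; apply: contraNneq xat => <-; exact: mem_last a t.
Qed.

Lemma hamiltonian_perm_enum : perm_eq s (enum 'I_n).
Proof.
case: ham_s => us ss.
have [|_ s_enum] := uniq_min_size us (fun i _ => mem_enum _ i).
  by rewrite size_enum_ord ss.
exact: uniq_perm us (enum_uniq _) s_enum.
Qed.

Lemma circuit_length_cpi (d : wgraph R n) (u : 'I_n -> R) :
  (forall p, p \in zip s (rot 1 s) -> d p.1 p.2 = u p.1 + u p.2) ->
  circuit_length d s = 2 * \sum_(j < n) u j.
Proof.
move=> du; rewrite /circuit_length big_seq (eq_bigr _ du) -big_seq big_split /=.
rewrite -(big_map fst xpredT u) -(big_map snd xpredT u).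
rewrite -/(unzip1 _) -/(unzip2 _) unzip1_zip ?unzip2_zip ?size_rot //.
rewrite [X in _ + X](perm_big s) ?perm_rot // (perm_big _ hamiltonian_perm_enum).
by rewrite big_enum -mulr2n mulr_natl.
Qed.

Lemma circuit_lengthD (d e f : wgraph R n) : (2 <= n)%N ->
  (forall j k, j != k -> d j k = e j k + f j k) ->
  circuit_length d s = circuit_length e s + circuit_length f s.
Proof.
move=> n2 def; rewrite /circuit_length -big_split /= !big_seq.
by apply: eq_bigr => p /(hamiltonian_edge_neq n2); apply: def.
Qed.

End Circuits.

Theorem theorem12 (R : realFieldType) (n : nat) (Hn : (4 <= n)%N)
  (G Gcpi Gcyc : wgraph R n) :
  symmetric_graph G -> symmetric_graph Gcpi -> symmetric_graph Gcyc ->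
  (* orthogonal decomposition G = G_cpi + G_cyclic *)
  (forall j k : 'I_n, j != k -> G j k = Gcpi j k + Gcyc j k) ->
  is_cpi Gcpi ->
  (forall H : wgraph R n, symmetric_graph H -> is_cpi H -> ginner Gcyc H = 0) ->
  let w := fun j : 'I_n => (n - 2)%:R^-1 * (vsum G j - Ttot G / 2) in
  (forall j k : 'I_n, j != k -> Gcpi j k = w j + w k) /\
  Ttot G = Ttot Gcpi /\ Ttot Gcpi = 2 * \sum_(j < n) w j /\
  (forall s : seq 'I_n, hamiltonian s ->
     circuit_length G s = Ttot G + circuit_length Gcyc s).
Proof.
move=> _ _ sCyc dec [u hu] orth w.
have n3 : (3 <= n)%N by apply: ltnW.
have n2 : (2 <= n)%N by apply: ltnW.
have vsumG m : vsum G m = vsum Gcpi m.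
  by rewrite (vsumD m dec) (vsum_orthogonal_cpi m sCyc orth) addr0.
have TG : Ttot G = Ttot Gcpi.
  by rewrite /Ttot; under eq_bigr do rewrite vsumG.
have wu j : w j = u j by rewrite /w vsumG TG -(cpi_weight_vsum j n3 hu).
split; first by move=> j k jk; rewrite hu // !wu.
split; first exact: TG.
split; first by rewrite (Ttot_cpi n2 hu) (eq_bigr _ (fun j _ => wu j)).
move=> s hs; rewrite (circuit_lengthD hs n2 dec) TG (Ttot_cpi n2 hu).
rewrite (circuit_length_cpi (u := u) hs) // => p /(hamiltonian_edge_neq hs n2).
exact: hu.
Qed.
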